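(* Let $f=p_1\cdots p_d\in\mathbb{C}[z_1,\dots,z_n]$ be a product of $d\ge 1$ homogeneous linear polynomials $p_1,\dots,p_d$. If $\mathcal I(f)\neq\mathbb{R}^n$, then the number of distinct hyperbolicity cones of $f$ is positive and at most $2^d$ if $1\le d\le n$, and at most $2\sum_{k=0}^{n-1}\binom{d-1}{k}$ if $d>n$.
   Context: For $f\in\mathbb{C}[z_1,\dots,z_n]$, $\mathcal{V}(f)\subseteq\mathbb{C}^n$ denotes its complex zero set and the imaginary projection of $f$ is $\mathcal{I}(f)=\{\Im(\mathbf z):\mathbf z\in\mathcal V(f)\}\subseteq\mathbb{R}^n$, where $\Im$ is taken componentwise. A homogeneous polynomial $f\in\mathbb{C}[z_1,\dots,z_n]$ is hyperbolic in direction $\mathbf e\in\mathbb{R}^n$ if $f(\mathbf e)\neq 0$ and for every $\mathbf x\in\mathbb{R}^n$ the univariate polynomial $t\mapsto f(\mathbf x+t\mathbf e)$ has only real roots. In that case the hyperbolicity cone of $f$ with respect to $\mathbf e$ is $C(\mathbf e)=\{\mathbf x\in\mathbb{R}^n: f(\mathbf x+t\mathbf e)=0\Rightarrow t<0\}$. The hyperbolicity cones of $f$ are the sets $C(\mathbf e)$ for all directions $\mathbf e$ in which $f$ is hyperbolic. *)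

(* The complex numbers are modelled by an arbitrary
   numClosedFieldType C (e.g. the complex numbers); "real" means x \is Num.real. *)
From HB Require Import structures.
From mathcomp Require Import all_boot all_order all_algebra.
Set Implicit Arguments. Unset Strict Implicit. Unset Printing Implicit Defensive.
Import Order.TTheory GRing.Theory Num.Theory.
Local Open Scope ring_scope.

Definition real_vec (C : numClosedFieldType) (n : nat) (x : 'I_n -> C) : Prop :=
  forall j, x j \is Num.real.

Definition linprod (C : numClosedFieldType) (n d : nat) (a : 'I_d -> 'I_n -> C)
  (z : 'I_n -> C) : C := \prod_(i < d) \sum_(j < n) a i j * z j.

Definition imag_proj_full (C : numClosedFieldType) (n : nat) (f : ('I_n -> C) -> C) : Prop :=
  forall y : 'I_n -> C, real_vec y ->
    exists z : 'I_n -> C, f z = 0 /\ forall j, 'Im (z j) = y j.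

Definition hyperbolic (C : numClosedFieldType) (n : nat) (f : ('I_n -> C) -> C)
  (e : 'I_n -> C) : Prop :=
  real_vec e /\ f e != 0 /\
  forall x : 'I_n -> C, real_vec x ->
    forall t : C, f (fun j => x j + t * e j) = 0 -> t \is Num.real.

Definition hcone (C : numClosedFieldType) (n : nat) (f : ('I_n -> C) -> C)
  (e x : 'I_n -> C) : Prop :=
  real_vec x /\ forall t : C, f (fun j => x j + t * e j) = 0 -> t < 0.

Definition hcone_count (C : numClosedFieldType) (n : nat) (f : ('I_n -> C) -> C)
  (N : nat) : Prop :=
  exists L : seq ('I_n -> C),
    size L = N /\
    (forall i, (i < size L)%N -> hyperbolic f (nth (fun _ => 0) L i)) /\
    (forall i k, (i < size L)%N -> (k < size L)%N -> i <> k ->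
       ~ (forall x, hcone f (nth (fun _ => 0) L i) x <-> hcone f (nth (fun _ => 0) L k) x)) /\
    (forall e, hyperbolic f e -> exists i, (i < size L)%N /\
       (forall x, hcone f e x <-> hcone f (nth (fun _ => 0) L i) x)).

From HB Require Import structures.
From mathcomp Require Import all_boot all_order all_algebra.
From mathcomp Require Import boolp ring zify.
Import Order.TTheory GRing.Theory Num.Theory.
Local Open Scope ring_scope.
Set Implicit Arguments. Unset Strict Implicit.

(* If I(f) is not all of R^n, every factor p_i is a nonzero multiple of a real linear
   form u_i: a factor with a non-real coefficient ratio has zeros with any prescribed
   imaginary part.  Then f is hyperbolic in a real direction e exactly when no u_i
   vanishes at e, and C(e) is the open region of the central arrangement of the
   hyperplanes u_i = 0 that contains e, determined by the sign vector of e.  So the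
   hyperbolicity cones are the regions of d central hyperplanes in R^n.  Deleting
   the first hyperplane, or restricting to it, gives the recursive bound
   c(m+1, k+1) <= c(m, k+1) + c(m, k) of Cover, whose solution is
   2 sum_{j<k} C(m-1, j) <= 2^m. *)

(* Cover's count of the regions of m central hyperplanes in general position in R^k. *)
Fixpoint cover_count (m k : nat) : nat :=
  match m, k with
  | 0, _ => 1
  | _.+1, 0 => 0
  | m'.+1, k'.+1 => cover_count m' k + cover_count m' k'
  end.

Lemma cover_count_le_exp m k : (cover_count m k <= 2 ^ m)%N.
Proof. by elim: m k => [|m IH] [|k] //=; rewrite expnS mul2n -addnn leq_add. Qed.

Lemma cover_countE m k : cover_count m.+1 k = (2 * \sum_(j < k) 'C(m, j))%N.
Proof.
elim: m k => [|m IH] [|k]; rewrite ?big_ord0 //.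
  by rewrite big_ord_recl /= big1.
have -> : cover_count m.+2 k.+1 = (cover_count m.+1 k.+1 + cover_count m.+1 k)%N by [].
rewrite !IH big_ord_recl [in RHS]big_ord_recl /=.
under [in RHS]eq_bigr => i _ do rewrite binS.
rewrite big_split /= !bin0.
have -> : \sum_(i < k) 'C(m, bump 0 i) = \sum_(i < k) 'C(m, i.+1) by [].
lia.
Qed.

Section SignVectors.
Variable C : numFieldType.

Definition dot k (c y : 'I_k -> C) : C := \sum_(j < k) c j * y j.

Lemma dot_real k (c y : 'I_k -> C) : (forall j, c j \is Num.real) ->
  (forall j, y j \is Num.real) -> dot c y \is Num.real.
Proof. by move=> cr yr; apply: rpred_sum => j _; apply: rpredM. Qed.

Lemma dot_shift k (c x e : 'I_k -> C) t :
  dot c (fun j => x j + t * e j) = dot c x + t * dot c e.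
Proof. by rewrite /dot mulr_sumr -big_split /=; apply: eq_bigr => j _; ring. Qed.

Lemma dot_comb k (c y1 y2 : 'I_k -> C) a b :
  dot c (fun j => a * y1 j + b * y2 j) = a * dot c y1 + b * dot c y2.
Proof. by rewrite /dot !mulr_sumr -big_split /=; apply: eq_bigr => j _; ring. Qed.

Definition sign_vector m k (c : 'I_m -> 'I_k -> C) (y : 'I_k -> C) : {ffun 'I_m -> bool} :=
  [ffun i => 0 < dot (c i) y].

(* The sign vectors of the open regions of the arrangement of hyperplanes [c i] in R^k. *)
Definition sign_vectors m k (c : 'I_m -> 'I_k -> C) : {set {ffun 'I_m -> bool}} :=
  [set s | `[< exists y, (forall j, y j \is Num.real) /\
                         (forall i, dot (c i) y != 0) /\ sign_vector c y = s >]].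

Lemma sign_vectors_zero_row m k (c : 'I_m -> 'I_k -> C) i :
  (forall j, c i j = 0) -> sign_vectors c = set0.
Proof.
move=> ci0; apply/setP => s; rewrite inE in_set0; apply/asboolP => -[y [_ [hy _]]].
by move: (hy i); rewrite /dot big1 ?eqxx // => j _; rewrite ci0 mul0r.
Qed.

Lemma real_conic_comb (x1 x2 a b : C) :
  x1 \is Num.real -> x2 \is Num.real -> x1 != 0 -> x2 != 0 ->
  (0 < x1) = (0 < x2) -> 0 < a -> 0 < b ->
  a * x1 + b * x2 != 0 /\ (0 < a * x1 + b * x2) = (0 < x1).
Proof.
move=> x1r x2r + + + a0 b0.
have cr : a * x1 + b * x2 \is Num.real by rewrite rpredD // rpredM // gtr0_real.
rewrite !real_neqr_lt ?real0 //.
case/orP=> [x1n|x1p] /orP[x2n|x2p]; rewrite ?(lt_gtF x1n) ?x1p ?(lt_gtF x2n) ?x2p // => _.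
  have s : a * x1 + b * x2 < 0.
    by rewrite -oppr_gt0 opprD addr_gt0 // -mulrN mulr_gt0 // oppr_gt0.
  by rewrite s (lt_gtF s).
by rewrite addr_gt0 ?orbT // mulr_gt0.
Qed.

(* Restricting to the hyperplane [h = 0] by eliminating the coordinate [p]. *)
Lemma dot_restrict k (g h y : 'I_k.+1 -> C) p : h p != 0 -> dot h y = 0 ->
  dot g y = dot (fun j => g (lift p j) - g p * h (lift p j) / h p) (fun j => y (lift p j)).
Proof.
move=> hp; rewrite /dot (bigD1_ord p) //= => hy0; rewrite (bigD1_ord p) //=.
under [in RHS]eq_bigr => j _ do rewrite mulrBl.
rewrite sumrB; set A := \sum_(i < k) h (lift p i) * y (lift p i) in hy0 *.
have -> : \sum_(i < k) g p * h (lift p i) / h p * y (lift p i) = g p / h p * A.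
  by rewrite mulr_sumr; apply: eq_bigr => i _; rewrite !mulrA [_ / h p]mulrAC.
have -> : A = - (h p * y p) by apply/eqP; rewrite -addr_eq0 addrC hy0.
by rewrite mulrN opprK mulrA mulfVK //; ring.
Qed.

Definition sign_tail m (s : {ffun 'I_m.+1 -> bool}) : {ffun 'I_m -> bool} :=
  [ffun i => s (lift ord0 i)].

Definition deletion m k (c : 'I_m.+1 -> 'I_k -> C) i := c (lift ord0 i).

Definition restriction m k (c : 'I_m.+1 -> 'I_k.+1 -> C) p i j :=
  c (lift ord0 i) (lift p j) - c (lift ord0 i) p * c ord0 (lift p j) / c ord0 p.

Lemma sign_tail_deletion m k (c : 'I_m.+1 -> 'I_k -> C) s :
  s \in sign_vectors c -> sign_tail s \in sign_vectors (deletion c).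
Proof.
rewrite !inE => /asboolP [y [yr [hy <-]]]; apply/asboolP; exists y.
by split=> //; split=> [i|]; [apply: hy | apply/ffunP => i; rewrite !ffunE].
Qed.

(* Two regions on either side of the first hyperplane with the same other signs are
   joined by a segment crossing it, inside a region of the restricted arrangement. *)
Lemma sign_tail_restriction m k (c : 'I_m.+1 -> 'I_k.+1 -> C) p s1 s2 :
  (forall i j, c i j \is Num.real) -> c ord0 p != 0 ->
  s1 \in sign_vectors c -> s2 \in sign_vectors c ->
  s1 ord0 -> ~~ s2 ord0 -> sign_tail s1 = sign_tail s2 ->
  sign_tail s1 \in sign_vectors (restriction c p).
Proof.
move=> cr cp; rewrite !inE => /asboolP [y1 [y1r [hy1 <-]]] /asboolP [y2 [y2r [hy2 <-]]].
rewrite !ffunE => pos1 npos2 same.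
have dr i y : (forall j, y j \is Num.real) -> dot (c i) y \is Num.real.
  by move=> yr; apply: dot_real => // j; apply: cr.
have neg2 : dot (c ord0) y2 < 0.
  by move: (hy2 ord0); rewrite real_neqr_lt ?real0 ?dr // (negbTE npos2) orbF.
pose a := - dot (c ord0) y2; pose b := dot (c ord0) y1.
have a0 : 0 < a by rewrite oppr_gt0.
pose y j := a * y1 j + b * y2 j.
have yr j : y j \is Num.real by rewrite rpredD // rpredM // gtr0_real.
have hy0 : dot (c ord0) y = 0 by rewrite dot_comb /a /b; ring.
apply/asboolP; exists (fun j => y (lift p j)); split=> [j|]; first exact: yr.
suff hi i : dot (c (lift ord0 i)) y != 0 /\
            (0 < dot (c (lift ord0 i)) y) = (0 < dot (c (lift ord0 i)) y1).
  split=> [i|]; first by rewrite -dot_restrict //; case: (hi i).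
  by apply/ffunP => i; rewrite !ffunE -dot_restrict //; case: (hi i).
rewrite dot_comb; apply: real_conic_comb; rewrite ?dr ?hy1 ?hy2 //.
by have := congr1 (fun f : {ffun 'I_m -> bool} => f i) same; rewrite !ffunE.
Qed.

Lemma card_sign_vectors m k (c : 'I_m -> 'I_k -> C) :
  (forall i j, c i j \is Num.real) -> (#|sign_vectors c| <= cover_count m k)%N.
Proof.
elim: m k c => [|m IH] k c cr.
  by apply: leq_trans (max_card _) _; rewrite card_ffun card_ord card_bool.
have [[p cp]|c0] := pselect (exists p, c ord0 p != 0); last first.
  rewrite (@sign_vectors_zero_row _ _ _ ord0) ?cards0 // => j.
  by apply/eqP/negPn/negP => cj; apply: c0; exists j.
move: p cp; case: k c cr => [|k] c cr p cp; first by case: p cp.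
pose S b := [set s in sign_vectors c | s ord0 == b].
have tail_inj b : {in S b &, injective (@sign_tail m)}.
  move=> s1 s2; rewrite !inE => /andP[_ /eqP h1] /andP[_ /eqP h2] e.
  apply/ffunP => i; case: (unliftP ord0 i) => [j ->|->]; last by rewrite h1 h2.
  by have := congr1 (fun f : {ffun 'I_m -> bool} => f j) e; rewrite !ffunE.
have del_sub : [set sign_tail s | s in S true] :|: [set sign_tail s | s in S false]
               \subset sign_vectors (deletion c).
  rewrite subUset; apply/andP; split; apply/subsetP => t /imsetP [s];
    by rewrite inE => /andP[hs _] ->; apply: sign_tail_deletion.
have res_sub : [set sign_tail s | s in S true] :&: [set sign_tail s | s in S false]
               \subset sign_vectors (restriction c p).
  apply/subsetP => t; rewrite inE => /andP[/imsetP [s1 + ->] /imsetP [s2 + e]].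
  move=> /setIdP[hs1 /eqP h1] /setIdP[hs2 /eqP h2].
  by apply: (sign_tail_restriction cr cp hs1 hs2); rewrite ?h1 ?h2.
have -> : sign_vectors c = S true :|: S false.
  by apply/setP => s; rewrite !inE; case: (s ord0) => /=; rewrite ?andbT ?andbF ?orbF.
have resr i j : restriction c p i j \is Num.real.
  by rewrite /restriction rpredB // ?rpredM // ?rpredV.
apply: leq_trans (leq_card_setU _ _) _.
rewrite -(card_in_imset (tail_inj true)) -(card_in_imset (tail_inj false)) -cardsUI.
apply: leq_add.
  exact: leq_trans (subset_leq_card del_sub) (IH _ _ (fun i j => cr _ _)).
exact: leq_trans (subset_leq_card res_sub) (IH _ _ resr).
Qed.

Lemma exists_off_hyperplanes m k (c : 'I_m -> 'I_k -> C) :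
  (forall i, exists j, c i j != 0) ->
  exists y : 'I_k -> C, (forall j, y j \is Num.real) /\ forall i, dot (c i) y != 0.
Proof.
move=> cnz; pose P i : {poly C} := \sum_(j < k) c i j *: 'X^j.
have coefP i (j : 'I_k) : (P i)`_j = c i j.
  rewrite coef_sum (bigD1 j) //= coefZ coefXn eqxx mulr1 big1 ?addr0 // => l lj.
  by rewrite coefZ coefXn (inj_eq val_inj) eq_sym (negbTE lj) mulr0.
have P_neq0 i : P i != 0.
  by have [j cj] := cnz i; apply: contraNneq cj => P0; rewrite -coefP P0 coef0.
pose Q := \prod_i P i.
have Q_neq0 : Q != 0 by apply/prodf_neq0 => i _.
(* Q has fewer than [size Q] roots, so one of [0, 1, ..., size Q - 1] is not a root. *)
have : ~~ all (root Q) [seq l%:R | l <- iota 0 (size Q)].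
  apply/negP => /(max_poly_roots Q_neq0).
  rewrite size_map size_iota ltnn map_inj_uniq ?iota_uniq => [/(_ isT) //|l1 l2 /eqP].
  by rewrite eqr_nat => /eqP.
case/allPn => _ /mapP [l _ ->]; rewrite /root horner_prod => /prodf_neq0 Ql.
exists (fun j => l%:R ^+ j); split=> [j|i]; first by rewrite realX ?realn.
by move: (Ql i isT); rewrite horner_sum /dot; under eq_bigr do rewrite hornerZ hornerXn.
Qed.

Lemma sign_vectors_gt0 m k (c : 'I_m -> 'I_k -> C) :
  (forall i, exists j, c i j != 0) -> (0 < #|sign_vectors c|)%N.
Proof.
move=> /exists_off_hyperplanes [y [yr hy]]; rewrite card_gt0.
by apply/set0Pn; exists (sign_vector c y); rewrite inE; apply/asboolP; exists y.
Qed.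

Lemma real_divr_gt0 (A B : C) :
  A \is Num.real -> B \is Num.real -> B != 0 ->
  (0 < A / B) = (A != 0) && ((0 < A) == (0 < B)).
Proof.
move=> Ar Br; rewrite real_neqr_lt ?real0 // => /orP[Bn|Bp].
  by rewrite nmulr_lgt0 ?invr_lt0 // (lt_gtF Bn); case: (real_ltgtP Ar (real0 _)).
by rewrite pmulr_lgt0 ?invr_gt0 // Bp; case: (real_ltgtP Ar (real0 _)).
Qed.

End SignVectors.

Lemma real_span_pair (C : numClosedFieldType) (al be w : C) :
  al != 0 -> be / al \isn't Num.real ->
  exists x0 x1, [/\ x0 \is Num.real, x1 \is Num.real & w = al * x0 + be * x1].
Proof.
move=> al0; set g := be / al => g_nreal.
have Img : 'Im g != 0 by apply: contra g_nreal => /eqP/Creal_ImP.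
pose v := w / al; pose x1 := 'Im v / 'Im g; pose x0 := 'Re v - 'Re g * x1.
exists x0, x1; split; rewrite ?rpredB ?rpredM ?rpredV ?Creal_Re ?Creal_Im //.
have -> : be = al * g by rewrite /g mulrC divfK.
have -> : w = al * v by rewrite /v mulrC divfK.
rewrite -mulrA -mulrDr; congr (al * _); rewrite /x0 /x1.
move: (Crect v) (Crect g) Img; set rv := 'Re v; set iv := 'Im v.
set rg := 'Re g; set ig := 'Im g => -> -> Img; field; exact: Img.
Qed.

Lemma imag_proj_full_nonreal_ratio (C : numClosedFieldType) n d (a : 'I_d -> 'I_n -> C)
    i j0 j1 :
  a i j0 != 0 -> a i j1 / a i j0 \isn't Num.real -> imag_proj_full (linprod a).
Proof.
move=> a0 nreal y yr.
have j10 : j1 != j0 by apply: contraNneq nreal => ->; rewrite divff // real1.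
pose s := \sum_j a i j * ('i * y j).
have [x0 [x1 [x0r x1r es]]] := real_span_pair (- s) a0 nreal.
pose x j := if j == j0 then x0 else if j == j1 then x1 else 0.
have xr j : x j \is Num.real by rewrite /x; case: ifP => _; [|case: ifP].
exists (fun j => x j + 'i * y j); split=> [|j]; last first.
  by rewrite raddfD /= ImMil (Creal_ImP _ (xr j)) (Creal_ReP _ (yr j)) add0r.
apply/eqP/prodf_eq0; exists i => //.
have -> : \sum_j a i j * (x j + 'i * y j) = \sum_j a i j * x j + s.
  by rewrite -big_split; apply: eq_bigr => j _; rewrite mulrDr.
rewrite (bigD1 j0) // (bigD1 j1) /= ?j10 // big1 => [|j /andP[nj1 nj0]].
  by rewrite /x eqxx (negbTE j10) eqxx addr0 -es addNr.
by rewrite /x (negbTE nj0) (negbTE nj1) mulr0.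
Qed.

Lemma ratio_real_of_not_imag_proj_full (C : numClosedFieldType) n d
    (a : 'I_d -> 'I_n -> C) i j0 :
  ~ imag_proj_full (linprod a) -> a i j0 != 0 -> forall j, a i j / a i j0 \is Num.real.
Proof.
move=> hI a0 j; apply/negPn/negP => nreal.
exact: hI (imag_proj_full_nonreal_ratio a0 nreal).
Qed.

Lemma seq_witnesses (T : eqType) (U : Type) (P : U -> T -> Prop) (x0 : U) (t0 : T)
    (s : seq T) :
  (forall t, t \in s -> exists x, P x t) ->
  exists L : seq U, size L = size s /\
    forall i, (i < size s)%N -> P (nth x0 L i) (nth t0 s i).
Proof.
elim: s => [|t s IH] hs; first by exists [::].
have [x hx] := hs t (mem_head _ _).
have [L [sizeL hL]] := IH (fun t' ht' => hs t' (mem_behead (s := t :: s) ht')).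
by exists (x :: L); split=> [|[|i] hi] /=; rewrite ?sizeL //; apply: hL.
Qed.

Section LinearProducts.
Variables (C : numClosedFieldType) (n d : nat).
Variables (a u : 'I_d -> 'I_n -> C) (lam : 'I_d -> C).
Hypothesis a_factor : forall i j, a i j = lam i * u i j.
Hypothesis lam_neq0 : forall i, lam i != 0.
Hypothesis u_real : forall i j, u i j \is Num.real.

Let f := linprod a.

Lemma linprod_eq0 z : (f z == 0) = [exists i, dot (u i) z == 0].
Proof.
have factor i : \sum_j a i j * z j = lam i * dot (u i) z.
  by rewrite /dot mulr_sumr; apply: eq_bigr => j _; rewrite a_factor mulrA.
apply/prodf_eq0/existsP => -[i]; rewrite ?factor.
  by rewrite mulf_eq0 (negbTE (lam_neq0 i)); exists i.
by move=> /eqP u0; exists i; rewrite // factor u0 mulr0.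
Qed.

Lemma dot_u_real y : real_vec y -> forall i, dot (u i) y \is Num.real.
Proof. by move=> yr i; apply: dot_real. Qed.

Lemma linprod_line_root x e t : (forall i, dot (u i) e != 0) ->
  f (fun j => x j + t * e j) = 0 -> exists i, t = - (dot (u i) x / dot (u i) e).
Proof.
move=> ne /eqP; rewrite linprod_eq0 => /existsP [i]; rewrite dot_shift => /eqP h.
exists i; apply: (mulIf (ne i)); rewrite mulNr divfK //.
by apply/eqP; rewrite -addr_eq0 addrC h.
Qed.

Lemma hyperbolic_linprodE e :
  hyperbolic f e <-> real_vec e /\ forall i, dot (u i) e != 0.
Proof.
split=> [[er [fe _]]|[er ne]].
  split=> // i; apply: contraNneq fe => ue0.
  by rewrite linprod_eq0; apply/existsP; exists i; rewrite ue0.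
split=> //; split.
  by rewrite linprod_eq0; apply/existsPn => i; apply: ne.
move=> x xr t /(linprod_line_root ne) [i ->].
by rewrite rpredN rpredM ?rpredV ?dot_u_real.
Qed.

Lemma hcone_linprodE e x : real_vec e -> (forall i, dot (u i) e != 0) ->
  hcone f e x <->
  [/\ real_vec x, forall i, dot (u i) x != 0 & sign_vector u x = sign_vector u e].
Proof.
move=> er ne; split=> [[xr root_neg]|[xr nx sx]].
  (* the i-th factor vanishes on the line x + t e at t = - u_i(x) / u_i(e) *)
  have sgn i : (dot (u i) x != 0) && ((0 < dot (u i) x) == (0 < dot (u i) e)).
    rewrite -real_divr_gt0 ?dot_u_real // -oppr_lt0; apply: root_neg.
    apply/eqP; rewrite linprod_eq0; apply/existsP; exists i.
    by rewrite dot_shift mulNr divfK // subrr.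
  split=> // [i|]; first by case/andP: (sgn i).
  by apply/ffunP => i; rewrite !ffunE; case/andP: (sgn i) => _ /eqP.
split=> // t /(linprod_line_root ne) [i ->].
rewrite oppr_lt0 real_divr_gt0 ?dot_u_real // nx.
have := congr1 (fun s : {ffun 'I_d -> bool} => s i) sx.
by rewrite !ffunE => ->; rewrite eqxx.
Qed.

Lemma hcone_linprod_ext e e' : hyperbolic f e -> hyperbolic f e' ->
  (forall x, hcone f e x <-> hcone f e' x) <-> sign_vector u e = sign_vector u e'.
Proof.
move=> /hyperbolic_linprodE [er ne] /hyperbolic_linprodE [er' ne']; split=> [same|se x].
  have /same : hcone f e e by apply/hcone_linprodE.
  by case/(hcone_linprodE _ er' ne').
by rewrite (hcone_linprodE _ er ne) (hcone_linprodE _ er' ne') se.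
Qed.

Lemma hcone_count_linprod : hcone_count f #|sign_vectors u|.
Proof.
pose S := enum (sign_vectors u).
have witness s : s \in S -> exists e, hyperbolic f e /\ sign_vector u e = s.
  rewrite mem_enum inE => /asboolP [e [er [ne <-]]].
  by exists e; split=> //; apply/hyperbolic_linprodE.
have [L [sizeL hL]] := seq_witnesses (fun _ => 0) [ffun=> false] witness.
exists L; rewrite sizeL; split; first by rewrite cardE.
split=> [i /hL []//|]; split=> [i k hi hk neq_ik same|e he].
  have [[hyp_i si] [hyp_k sk]] := (hL i hi, hL k hk).
  move/(hcone_linprod_ext hyp_i hyp_k): same; rewrite si sk => /eqP.
  by rewrite nth_uniq ?enum_uniq // => /eqP /neq_ik.
have Se : sign_vector u e \in S.
  rewrite mem_enum inE; apply/asboolP; exists e.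
  by case/hyperbolic_linprodE: he.
have hi : (index (sign_vector u e) S < size S)%N by rewrite index_mem.
exists (index (sign_vector u e) S); split=> //.
have [hyp_i si] := hL _ hi.
by apply/(hcone_linprod_ext he hyp_i); rewrite si nth_index.
Qed.

End LinearProducts.

Theorem lemma3p1 (C : numClosedFieldType) (n d : nat) (a : 'I_d -> 'I_n -> C)
  (hd : (1 <= d)%N) (hlin : forall i, exists j, a i j != 0)
  (hI : ~ imag_proj_full (linprod a)) :
  exists N : nat, hcone_count (linprod a) N /\ (0 < N)%N /\
    (if (d <= n)%N then (N <= 2 ^ d)%N
     else (N <= 2 * \sum_(k < n) 'C(d.-1, k))%N).
Proof.
have [j0 a_j0] := fin_all_exists hlin.
pose u i j := a i j / a i (j0 i).
have u_real i j : u i j \is Num.real := ratio_real_of_not_imag_proj_full hI (a_j0 i) j.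
have a_factor i j : a i j = a i (j0 i) * u i j by rewrite /u mulrC divfK.
exists #|sign_vectors u|; split; first exact: hcone_count_linprod a_factor a_j0 u_real.
split.
  by apply: sign_vectors_gt0 => i; exists (j0 i); rewrite /u divff ?oner_eq0.
have := card_sign_vectors u_real; case: ifP => _ bound.
  exact: leq_trans bound (cover_count_le_exp _ _).
by rewrite -cover_countE prednK.
Qed.
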